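(* If $\mu$ is a super-strict partition, then the generating function $\sum_{n\ge1}|\mathrm{Av}_n(\mu)|z^n$ is a rational function of $z$.
   Context: A partition is a weakly decreasing sequence of nonnegative integers with finitely many nonzero parts, identified with its Ferrers board. $\alpha$ contains $\mu$ if one can delete some rows and some columns of the Ferrers board of $\alpha$ so that after top/left-justifying the remaining boxes one obtains $\mu$; otherwise $\alpha$ avoids $\mu$. $\mathrm{Av}_n(\mu)$ is the set of partitions of weight $n$ avoiding $\mu$. A partition is super-strict if any two of its positive parts differ by at least $2$. *)

From HB Require Import structures.
From mathcomp Require Import all_boot all_order all_algebra.
From Stdlib Require Import ClassicalEpsilon.
Set Implicit Arguments. Unset Strict Implicit. Unset Printing Implicit Defensive.
Import GRing.Theory.

(* A partition is represented by the list of its positive parts, in weakly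
   decreasing order (trailing zeros omitted). *)
Definition is_partition (s : seq nat) : bool :=
  sorted geq s && all (fun x => 0 < x) s.

Definition super_strict (mu : seq nat) : Prop :=
  forall i j, i < j < size mu -> nth 0 mu j + 2 <= nth 0 mu i.

(* The Ferrers board of alpha is {(i,j) | j < alpha_i} (0-indexed).
   Keeping the rows r (a subsequence of alpha) and the set of columns C,
   row a keeps the boxes j in C with j < a; after left-justifying, its length
   is count (fun j => j < a) C; the kept row lengths are weakly decreasing, so
   top-justifying only removes the empty rows. *)
Definition contains (alpha mu : seq nat) : Prop :=
  exists (r C : seq nat), [/\ subseq r alpha, uniq C &
    [seq x <- [seq count (fun j => j < a) C | a <- r] | 0 < x] = mu].

Definition containsb (alpha mu : seq nat) : bool :=
  if excluded_middle_informative (contains alpha mu) then true else false.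

(* all sequences of length <= n with entries <= n (a superset of the
   partitions of n) *)
Definition cand (n : nat) : seq (seq nat) :=
  flatten [seq [seq map (@nat_of_ord n.+1) (tval t) | t <- enum {: k.-tuple 'I_n.+1}]
          | k <- iota 0 n.+1].

Definition Av_card (n : nat) (mu : seq nat) : nat :=
  count (fun p => [&& is_partition p, sumn p == n & ~~ containsb p mu])
        (undup (cand n)).

(* f : nat -> rat, viewed as the formal power series sum_n f n z^n, is rational:
   Q * F = P as formal power series with Q(0) <> 0, i.e. F = P/Q. *)
Definition rational_series (f : nat -> rat) : Prop :=
  exists P Q : {poly rat}, (Q`_0 != 0)%R /\
    forall n, (\sum_(i < n.+1) Q`_i * f (n - i)%N = P`_n)%R.

Definition Av_gf_coef (mu : seq nat) (n : nat) : rat :=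
  if n == 0%N then 0%R else ((Av_card n mu)%:R)%R.

From mathcomp Require Import all_boot all_order all_algebra.
From Stdlib Require Import ClassicalEpsilon.
From mathcomp Require Import zify.
Set Implicit Arguments. Unset Strict Implicit. Unset Printing Implicit Defensive.
Import GRing.Theory.

(* List the parts of mu increasingly, x_1 < ... < x_k, with gaps
   g_i = x_(i+1) - x_i >= 2.  A partition alpha contains mu exactly when it has
   parts u_1 < ... < u_k with u_1 >= x_1 and u_(i+1) >= u_i + g_i: the rows u_i
   together with suitable columns realise mu, and conversely the kept rows of an
   occurrence form such a chain.  A chain exists iff the greedy choice (always
   the least admissible part) never gets stuck, so alpha avoids mu iff the
   greedy walk gets stuck after exactly j < k steps, i.e. after the steps
   g_1, ..., g_j it reaches a threshold U and all parts of alpha are below U.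

   Counting the partitions of n whose greedy walk along a list of steps ends at
   U with all parts below U + e is done by induction on the list of steps:
   subtracting e from the largest part is a bijection which yields a linear
   recurrence a_n = a_(n-e) + r_n whose inhomogeneous term r is a difference of
   two counts for the shorter list; the base case counts partitions with
   bounded parts.  Absorbing the cap into the last step g turns a cap 0 into
   a shift by g - 1, which is positive because mu is super-strict. *)

Section RationalSeries.
Local Open Scope ring_scope.

Definition trunc_series (f : nat -> rat) (N : nat) : {poly rat} := \poly_(i < N) f i.

Definition eqmodX (N : nat) (p q : {poly rat}) : Prop :=
  forall n, (n < N)%N -> p`_n = q`_n.

Lemma eqmodX_add N p p' q q' :
  eqmodX N p p' -> eqmodX N q q' -> eqmodX N (p + q) (p' + q').
Proof. by move=> hp hq n hn; rewrite !coefD hp ?hq. Qed.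

Lemma eqmodX_mul N p p' q q' :
  eqmodX N p p' -> eqmodX N q q' -> eqmodX N (p * q) (p' * q').
Proof.
move=> hp hq n hn; rewrite !coefM; apply: eq_bigr => i _.
have hi : (i <= n)%N by rewrite -ltnS.
by rewrite hp ?hq //; [exact: leq_ltn_trans (leq_subr _ _) hn | exact: leq_ltn_trans hi hn].
Qed.

Lemma eqmodX_trans N p q r : eqmodX N p q -> eqmodX N q r -> eqmodX N p r.
Proof. by move=> h1 h2 n hn; rewrite h1 ?h2. Qed.

Lemma rational_seriesP f : rational_series f <->
  exists P Q : {poly rat}, Q`_0 != 0 /\ forall N, eqmodX N (Q * trunc_series f N) P.
Proof.
split=> -[P [Q [hQ h]]]; exists P, Q; split=> //.
  move=> N n hn; rewrite coefM -h; apply: eq_bigr => i _.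
  by rewrite coef_poly (leq_ltn_trans (leq_subr _ _) hn).
move=> n; have := h n.+1 n (ltnSn n); rewrite coefM => <-; apply: eq_bigr => i _.
by rewrite coef_poly ltnS leq_subr.
Qed.

Lemma eq_rational_series f g : f =1 g -> rational_series f -> rational_series g.
Proof.
move=> h [P [Q [hQ hr]]]; exists P, Q; split=> // n; rewrite -hr.
by apply: eq_bigr => i _; rewrite h.
Qed.

Lemma rational_seriesD f g : rational_series f -> rational_series g ->
  rational_series (fun n => f n + g n).
Proof.
move=> /rational_seriesP [P1 [Q1 [h1 e1]]] /rational_seriesP [P2 [Q2 [h2 e2]]].
apply/rational_seriesP; exists (Q2 * P1 + Q1 * P2), (Q1 * Q2); split.
  by rewrite coef0M mulf_neq0.
move=> N; have -> : trunc_series (fun n => f n + g n) N = trunc_series f N + trunc_series g N.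
  by apply/polyP => i; rewrite coefD !coef_poly; case: ifP; rewrite ?addr0.
rewrite mulrDr.
have -> : Q1 * Q2 * trunc_series f N = Q2 * (Q1 * trunc_series f N).
  by rewrite mulrA (mulrC Q2).
have -> : Q1 * Q2 * trunc_series g N = Q1 * (Q2 * trunc_series g N) by rewrite mulrA.
by apply: eqmodX_add; apply: eqmodX_mul.
Qed.

Lemma rational_seriesZ c f : rational_series f -> rational_series (fun n => c * f n).
Proof.
move=> /rational_seriesP [P [Q [hQ e]]]; apply/rational_seriesP.
exists (c%:P * P), Q; split=> // N.
have -> : trunc_series (fun n => c * f n) N = c%:P * trunc_series f N.
  by apply/polyP => i; rewrite coefCM !coef_poly; case: ifP; rewrite ?mulr0.
by rewrite mulrA (mulrC Q) -mulrA; apply: eqmodX_mul.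
Qed.

Lemma rational_series_finite f N0 :
  (forall n, (N0 <= n)%N -> f n = 0) -> rational_series f.
Proof.
move=> hf; apply/rational_seriesP; exists (trunc_series f N0), 1; split.
  by rewrite coef1.
by move=> N n hn; rewrite mul1r !coef_poly hn; case: ltnP => // /hf.
Qed.

(* A solution of a_n = a_(n-e) + r_n (with a_n = r_n for n < e) is rational when
   r is: (1 - z^e) A = R. *)
Lemma rational_series_rec (a r : nat -> rat) (e : nat) : (0 < e)%N ->
  rational_series r ->
  (forall n, a n = (if (e <= n)%N then a (n - e)%N else 0) + r n) ->
  rational_series a.
Proof.
move=> he /rational_seriesP [P [Q [hQ hr]]] ha; apply/rational_seriesP.
exists P, ((1 - 'X^e) * Q); split.
  by rewrite coef0M coefB coef1 coefXn; case: (e) he => // e' _; rewrite subr0 mul1r.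
move=> N; have hrec : eqmodX N ((1 - 'X^e) * trunc_series a N) (trunc_series r N).
  move=> n hn; rewrite mulrBl mul1r coefB coefXnM !coef_poly hn ha.
  case: ltnP => hen; first by rewrite subr0 add0r.
  by rewrite (leq_ltn_trans (leq_subr _ _) hn) addrC addKr.
rewrite -mulrA (mulrC Q) mulrA; apply: eqmodX_trans (hr N).
by rewrite (mulrC _ Q); apply: eqmodX_mul.
Qed.

Lemma rational_series_sum (K : nat) (f : nat -> nat -> rat) :
  (forall j, (j < K)%N -> rational_series (f j)) ->
  rational_series (fun n => \sum_(j < K) f j n).
Proof.
elim: K => [|K IH] h.
  by apply: (@rational_series_finite _ 0) => n _; rewrite big_ord0.
have hK := rational_seriesD (IH (fun j hj => h j (ltnW hj))) (h K (ltnSn K)).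
by apply: eq_rational_series hK => n; rewrite big_ord_recr.
Qed.

Lemma rational_series_drop0 f : rational_series f ->
  rational_series (fun n => if n == 0%N then 0 else f n).
Proof.
move=> hf; have hc : rational_series (fun n => if n == 0%N then - f 0%N else 0).
  by apply: (@rational_series_finite _ 1) => -[|n].
by apply: eq_rational_series (rational_seriesD hf hc) => -[|n] /=; rewrite ?subrr ?addr0.
Qed.

End RationalSeries.

Lemma geq_trans : transitive geq.
Proof. by move=> y x z h1 h2; exact: leq_trans h2 h1. Qed.

Lemma geq_total : total geq.
Proof. by move=> x y; exact: leq_total. Qed.

Lemma geq_anti : antisymmetric geq.
Proof. by move=> x y h; apply/eqP; rewrite eqn_leq andbC. Qed.

Lemma part_pos p x : is_partition p -> x \in p -> 0 < x.
Proof. by case/andP => _ /allP h /h. Qed.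

Lemma part_cons a s :
  is_partition (a :: s) = [&& path geq a s, 0 < a & is_partition s].
Proof.
rewrite /is_partition /=; case h: (path geq a s) => //=.
by rewrite (path_sorted h) andbA.
Qed.

Lemma part_head p x : is_partition p -> x \in p -> x <= head 0 p.
Proof.
case: p => // a s /andP [hs _]; rewrite inE => /orP [/eqP -> //|hx].
by have /allP := order_path_min geq_trans hs; move/(_ x hx).
Qed.

Lemma head_max p M : is_partition p -> M \in p -> (forall x, x \in p -> x <= M) ->
  head 0 p = M.
Proof.
move=> hp hM hall; apply/eqP; rewrite eqn_leq part_head // andbT.
by case: p hp hM hall => // a s _ _ h; apply: h; rewrite mem_head.
Qed.

Lemma mem_sumn p x : x \in p -> x <= sumn p.
Proof.
elim: p => // a s IH; rewrite inE /= => /orP [/eqP ->|/IH h]; first exact: leq_addr.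
exact: leq_trans h (leq_addl _ _).
Qed.

Lemma part_size p : is_partition p -> size p <= sumn p.
Proof.
elim: p => // a s IH /andP [hs /= /andP [ha hall]] /=.
rewrite -add1n leq_add //; apply: IH; rewrite /is_partition hall andbT.
exact: path_sorted hs.
Qed.

Lemma sort_part s : all (fun x => 0 < x) s -> is_partition (sort geq s).
Proof.
move=> h; rewrite /is_partition sort_sorted ?geq_total //=.
by apply/allP => x; rewrite mem_sort => /(allP h).
Qed.

Lemma mem_cand n p : is_partition p -> sumn p = n -> p \in cand n.
Proof.
move=> hp hs; apply/flattenP.
have hsz : size p <= n by rewrite -hs part_size.
exists [seq map (@nat_of_ord n.+1) (tval t) | t <- enum {: (size p).-tuple 'I_n.+1}].
  by apply/mapP; exists (size p) => //; rewrite mem_iota add0n ltnS.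
have hsz2 : size (map (fun x => @inord n x) p) == size p by rewrite size_map.
apply/mapP; exists (Tuple hsz2); first by rewrite mem_enum.
rewrite /= -map_comp map_id_in // => x hx /=; rewrite inordK // ltnS -hs.
exact: mem_sumn.
Qed.

Definition propb (P : Prop) : bool :=
  if excluded_middle_informative P then true else false.

Lemma propbP P : reflect P (propb P).
Proof. by rewrite /propb; case: excluded_middle_informative => h; constructor. Qed.

Definition partitions n := [seq p <- undup (cand n) | is_partition p && (sumn p == n)].

Lemma partitions_uniq n : uniq (partitions n).
Proof. exact/filter_uniq/undup_uniq. Qed.

Lemma mem_partitions n p : (p \in partitions n) = is_partition p && (sumn p == n).
Proof.
rewrite mem_filter mem_undup; case h: (is_partition p && (sumn p == n)) => //=.
by case/andP: h => h1 /eqP h2; rewrite mem_cand.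
Qed.

Definition pcount (P : seq nat -> Prop) n := count (fun p => propb (P p)) (partitions n).

Lemma eq_pcount (P Q : seq nat -> Prop) n :
  (forall p, is_partition p -> sumn p = n -> (P p <-> Q p)) -> pcount P n = pcount Q n.
Proof.
move=> h; apply: eq_in_count => p; rewrite mem_partitions => /andP [h1 /eqP h2].
by apply/propbP/propbP; apply h.
Qed.

Lemma pcount0 (P : seq nat -> Prop) n :
  (forall p, is_partition p -> sumn p = n -> ~ P p) -> pcount P n = 0.
Proof.
move=> h; apply/eqP; rewrite -leqn0 leqNgt -has_count; apply/hasP => -[p].
by rewrite mem_partitions => /andP [h1 /eqP h2] /propbP; apply: h.
Qed.

Lemma pcount_split (P R : seq nat -> Prop) n :
  pcount P n = pcount (fun p => P p /\ R p) n + pcount (fun p => P p /\ ~ R p) n.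
Proof.
rewrite /pcount -count_predUI [X in _ + X](_ : _ = 0).
  rewrite addn0; apply: eq_count => p /=.
  apply/propbP/orP => [h|[/propbP [] | /propbP []] //].
  by case: (propbP (R p)) => hr; [left | right]; apply/propbP.
apply/eqP; rewrite -leqn0 leqNgt -has_count.
by apply/hasP => -[p _ /andP [/propbP [] _ h1 /propbP [] _ h2]].
Qed.

Lemma pcount_sub (P Q : seq nat -> Prop) n : (forall p, P p -> Q p) ->
  pcount Q n = pcount P n + pcount (fun p => Q p /\ ~ P p) n.
Proof.
move=> h; rewrite (pcount_split Q P); congr (_ + _); apply: eq_pcount => p _ _.
by split=> [[]|] //; split=> //; apply: h.
Qed.

Lemma pcount_bij (P Q : seq nat -> Prop) n m (f : seq nat -> seq nat) :
  (forall p, is_partition p -> sumn p = n -> P p ->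
     [/\ is_partition (f p), sumn (f p) = m & Q (f p)]) ->
  (forall p1 p2, is_partition p1 -> sumn p1 = n -> P p1 ->
     is_partition p2 -> sumn p2 = n -> P p2 -> f p1 = f p2 -> p1 = p2) ->
  (forall q, is_partition q -> sumn q = m -> Q q ->
     exists p, [/\ is_partition p, sumn p = n, P p & f p = q]) ->
  pcount P n = pcount Q m.
Proof.
move=> hf hinj hsurj; rewrite /pcount -!size_filter.
set s := filter _ _; set t := filter _ _.
have hs x : x \in s -> [/\ is_partition x, sumn x = n & P x].
  by rewrite mem_filter mem_partitions => /andP [/propbP h /andP [h1 /eqP h2]].
have hu : uniq (map f s).
  rewrite map_inj_in_uniq; first exact/filter_uniq/partitions_uniq.
  by move=> x y /hs [hx1 hx2 hx3] /hs [hy1 hy2 hy3]; apply: hinj.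
rewrite -(size_map f); apply: perm_size; apply: uniq_perm => //.
  exact/filter_uniq/partitions_uniq.
move=> q; apply/mapP/idP.
  move=> [p /hs [h1 h2 h3] ->]; have [q1 q2 q3] := hf p h1 h2 h3.
  by rewrite mem_filter mem_partitions q1 q2 eqxx; apply/andP; split=> //; apply/propbP.
rewrite mem_filter mem_partitions => /andP [/propbP hq /andP [h1 /eqP h2]].
have [p [p1 p2 p3 <-]] := hsurj q h1 h2 hq; exists p => //.
by rewrite mem_filter mem_partitions p1 p2 eqxx; apply/andP; split=> //; apply/propbP.
Qed.

Lemma pcount_disjoint_sum K (P : nat -> seq nat -> Prop) n :
  (forall p i j, i < K -> j < K -> P i p -> P j p -> i = j) ->
  pcount (fun p => exists2 j, j < K & P j p) n = \sum_(j < K) pcount (P j) n.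
Proof.
move=> hu; rewrite /pcount; elim: (partitions n) => [|x s IH] /=.
  by rewrite big1.
rewrite big_split /= IH; congr (_ + _).
case: (propbP (exists2 j, j < K & P j x)) => [[j hj hp]|hn].
  rewrite (bigD1 (Ordinal hj)) //= big1 ?addn0; first by case: propbP.
  move=> i hi; case: propbP => // hpi; exfalso; move: hi; rewrite -val_eqE /=.
  by rewrite (hu x i j) ?eqxx.
by rewrite big1 // => i _; case: propbP => // hpi; exfalso; apply: hn; exists i.
Qed.

Definition parts_below M (p : seq nat) : Prop := forall x, x \in p -> x < M.

Lemma pcount_parts_below_small M n : M <= 1 -> pcount (parts_below M) n = (n == 0).
Proof.
move=> hM; rewrite (@eq_pcount _ (fun p => p = [::])).
  rewrite /pcount (eq_count (a2 := pred1 [::])); last by move=> p; apply/propbP/eqP.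
  by rewrite count_uniq_mem ?partitions_uniq // mem_partitions /= eq_sym.
move=> p hp _; split=> [h|-> //].
case: p hp h => // a s hp h.
by have := part_pos hp (mem_head a s); have := h a (mem_head a s); lia.
Qed.

(* Splitting off one part equal to M: the partitions with parts below M + 1
   satisfy  P_(M+1)(n) = P_(M+1)(n - M) + P_M(n). *)
Lemma pcount_parts_below_rec M n : 0 < M ->
  pcount (parts_below M.+1) n =
  (if M <= n then pcount (parts_below M.+1) (n - M) else 0) + pcount (parts_below M) n.
Proof.
move=> hM; rewrite (pcount_split _ (fun p => M \in p)); congr (_ + _); last first.
  apply: eq_pcount => p _ _; split.
    case=> h1 h2 x hx; have := h1 x hx; case: (ltngtP x M) => //.
      by move=> ha hb; lia.
    by move=> e; move: hx; rewrite e => /h2.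
  by move=> h; split=> [x /h|/h]; lia.
case: leqP => hn; last by apply: pcount0 => p hp hs [_ /mem_sumn]; lia.
apply: (pcount_bij (f := behead)).
- move=> [|a s] hp hs [h1 h2] //; rewrite part_cons in hp.
  case/and3P: hp => hpa ha hs'.
  have ea : a = M.
    apply: (head_max (p := a :: s)) => [|//|x /h1]; last by rewrite ltnS.
    by rewrite part_cons hpa ha hs'.
  subst a; split=> //=; first by move: hs => /=; lia.
  by move=> x hx; apply: h1; rewrite inE hx orbT.
- move=> [|a1 s1] [|a2 s2] hp1 hs1 [h1 h1'] hp2 hs2 [h2 h2'] //= es; subst s2.
  have e1 : a1 = M.
    by apply: (head_max (p := a1 :: s1)) => // x /h1; rewrite ltnS.
  have e2 : a2 = M.
    by apply: (head_max (p := a2 :: s1)) => // x /h2; rewrite ltnS.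
  by rewrite e1 e2.
- move=> q hq hs h; exists (M :: q); split=> //=.
  + rewrite part_cons hq hM; case: q hq hs h => [|a s] hq _ h; rewrite ?andbT //=.
    by rewrite -ltnS h ?mem_head //=; case/andP: hq.
  + lia.
  + split; last by rewrite mem_head.
    by move=> x; rewrite inE => /orP [/eqP ->|/h].
Qed.

(* Partitions with bounded parts: the series prod_(m < M) 1/(1 - z^m). *)
Lemma rational_parts_below M : rational_series (fun n => (pcount (parts_below M) n)%:R%R).
Proof.
elim: M => [|M IH].
  by apply: (@rational_series_finite _ 1) => -[|n] // _; rewrite pcount_parts_below_small.
case: (posnP M) => hM.
  by subst M; apply: (@rational_series_finite _ 1) => -[|n] // _;
    rewrite pcount_parts_below_small.
apply: (rational_series_rec hM IH) => n.
by rewrite pcount_parts_below_rec // natrD; case: leqP.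
Qed.

Fixpoint greedy_walk (T : nat) (ws : seq nat) (U : nat) (S : nat -> Prop) : Prop :=
  match ws with
  | [::] => U = T
  | w :: ws' => exists b, [/\ S b, T <= b, (forall x, S x -> T <= x -> b <= x)
                                & greedy_walk (b + w) ws' U S]
  end.

Definition walk_capped T ws e S :=
  exists U, greedy_walk T ws U S /\ forall x, S x -> x < U + e.

Definition least_capped U d (S : nat -> Prop) := exists b, [/\ S b, U <= b,
  (forall x, S x -> U <= x -> b <= x) & forall x, S x -> x < b + d].

Lemma greedy_walk_ge T ws U S : greedy_walk T ws U S -> T <= U.
Proof.
elim: ws T => [|w ws IH] T /=; first by move->.
by case=> b [_ hb _ /IH h]; exact: leq_trans hb (leq_trans (leq_addr _ _) h).
Qed.

Lemma greedy_walk_uniq T ws U1 U2 S :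
  greedy_walk T ws U1 S -> greedy_walk T ws U2 S -> U1 = U2.
Proof.
elim: ws T => [|w ws IH] T /=; first by move=> -> ->.
case=> b1 [s1 t1 m1 l1] [b2 [s2 t2 m2 l2]].
have eb : b1 = b2 by apply/eqP; rewrite eqn_leq m1 // m2.
by subst b2; apply: IH l1 l2.
Qed.

Lemma greedy_walk_local T ws U S S' : all (fun w => 0 < w) ws ->
  greedy_walk T ws U S -> (forall x, x < U -> (S x <-> S' x)) -> greedy_walk T ws U S'.
Proof.
elim: ws T => [|w ws IH] T //= /andP [hw hws] [b [s1 t1 m1 l1]] hS.
have hbU : b < U by have := greedy_walk_ge l1; lia.
exists b; split=> //; first by apply/hS.
  move=> x hx hTx; case: (ltnP x U) => hxU; first by apply: m1 => //; apply/hS.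
  exact: leq_trans (ltnW hbU) hxU.
exact: IH.
Qed.

Lemma walk_capped_rcons T pre d e S :
  walk_capped T (rcons pre d) e S <->
  exists U, greedy_walk T pre U S /\ least_capped U (d + e) S.
Proof.
elim: pre T => [|w pre IH] T /=.
  split.
    case=> U' [[b [s1 t1 m1 ->]] h]; exists T; split=> //; exists b; split=> //.
    by move=> x /h; rewrite addnA.
  case=> U [-> [b [s1 t1 m1 h]]]; exists (b + d); split; first by exists b.
  by move=> x /h; rewrite addnA.
split.
  case=> U' [[b [s1 t1 m1 l1]] h].
  have [U [l2 tp]] : exists U, greedy_walk (b + w) pre U S /\ least_capped U (d + e) S.
    by apply/IH; exists U'.
  by exists U; split=> //; exists b.
case=> U [[b [s1 t1 m1 l1]] tp].
have [U' [l2 h]] : walk_capped (b + w) (rcons pre d) e S by apply/IH; exists U.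
by exists U'; split=> //; exists b.
Qed.

Lemma walk_capped_last T pre d e S :
  walk_capped T (rcons pre d) e S <-> walk_capped T (rcons pre (d + e)) 0 S.
Proof. by rewrite !walk_capped_rcons addn0. Qed.

Lemma walk_capped_mono T ws e S : walk_capped T ws 0 S -> walk_capped T ws e S.
Proof.
case=> U [l h]; exists U; split=> // x /h; rewrite addn0 => /leq_trans; apply.
exact: leq_addr.
Qed.

Lemma exists_least (p : seq nat) U : has (fun x => U <= x) p ->
  exists b, [/\ b \in p, U <= b & forall x, x \in p -> U <= x -> b <= x].
Proof.
move=> hU; have hex : exists y, (y \in p) && (U <= y).
  by case/hasP: hU => y hy hUy; exists y; rewrite hy.
case: (ex_minnP hex) => b /andP [hb1 hb2] hm; exists b; split=> // y h1 h2.
by apply: hm; rewrite h1 h2.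
Qed.

Definition part_set (p : seq nat) : nat -> Prop := fun x => x \in p.

(* Fix a start T > 0, positive steps pre and
   e > 0.  A partition is "capped" when its walk along pre reaches some U, it
   has a least part b >= U, and all its parts are at most b + e.  Lowering the
   largest part by e maps the capped partitions whose largest part is at least
   U + e bijectively onto all capped partitions (of n - e); the remaining
   capped partitions are those whose parts are all below U + e but not all
   below U. *)
Section LowerLargest.
Variables (T : nat) (pre : seq nat) (e : nat).
Hypotheses (hT : 0 < T) (hpre : all (fun w => 0 < w) pre) (he : 0 < e).

Definition capped p := walk_capped T (rcons pre e.+1) 0 (part_set p).

Definition largest_high p :=
  exists U, greedy_walk T pre U (part_set p) /\ U + e <= head 0 p.

Definition shiftable p := capped p /\ largest_high p.

Definition lower_largest p := sort geq (head 0 p - e :: behead p).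

Lemma cappedP p : capped p <-> exists U b, [/\ greedy_walk T pre U (part_set p),
  b \in p, U <= b, (forall x, x \in p -> U <= x -> b <= x) & (forall x, x \in p -> x < b + e.+1)].
Proof.
rewrite /capped walk_capped_rcons addn0; split.
  by case=> U [l [b [s1 s2 s3 s4]]]; exists U, b.
by case=> U [b [l s1 s2 s3 s4]]; exists U; split=> //; exists b.
Qed.

Lemma lower_largest_spec p : is_partition p -> shiftable p ->
  [/\ is_partition (lower_largest p), sumn (lower_largest p) = sumn p - e,
      e <= head 0 p &
   exists U, [/\ greedy_walk T pre U (part_set (lower_largest p)),
     head 0 p - e \in lower_largest p, U <= head 0 p - e,
     (forall x, x \in lower_largest p -> U <= x -> head 0 p - e <= x)
     & capped (lower_largest p)]].
Proof.
move=> hp [/cappedP [U [b [l s1 s2 s3 s4]]] [U' [l' hU']]].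
have eU : U' = U by apply: greedy_walk_uniq l' l.
subst U'.
case: p hp l l' s1 s3 s4 hU' => [|L s] hp l l' s1 s3 s4 /= hU'; first lia.
have hmax x : x \in L :: s -> x <= L by move=> hx; exact: (part_head hp hx).
have hLb : L < b + e.+1 by apply: s4; rewrite mem_head.
have hmem x : (x \in lower_largest (L :: s)) = (x == L - e) || (x \in s).
  by rewrite mem_sort inE.
have hs x : x \in s -> x \in L :: s by move=> h; rewrite inE h orbT.
have hpos : all (fun x => 0 < x) (L - e :: s).
  have hTU := greedy_walk_ge l.
  rewrite /=; apply/andP; split; first lia.
  by case/andP: hp => _ /= /andP [].
have hmin x : x \in lower_largest (L :: s) -> U <= x -> L - e <= x.
  rewrite hmem => /orP [/eqP -> //|/hs hx hUx]; have := s3 x hx hUx; lia.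
have hl2 : greedy_walk T pre U (part_set (lower_largest (L :: s))).
  apply: (greedy_walk_local hpre l) => x hx; rewrite /part_set hmem inE.
  have -> : (x == L - e) = false by apply/negbTE; lia.
  by have -> : (x == L) = false by apply/negbTE; lia.
have hLe : L - e \in lower_largest (L :: s) by rewrite hmem eqxx.
split=> //; first exact: sort_part.
- by rewrite (perm_sumn (permEl (perm_sort _ _))) /=; lia.
- lia.
exists U; split=> //; first lia.
apply/cappedP; exists U, (L - e); split=> //; first lia.
by move=> x; rewrite hmem => /orP [/eqP ->|/hs /hmax]; lia.
Qed.

(* Two shiftable partitions with the same image have the same largest part
   (the least part >= U of the image, plus e), hence are equal. *)
Lemma lower_largest_inj p1 p2 : is_partition p1 -> shiftable p1 ->
  is_partition p2 -> shiftable p2 -> lower_largest p1 = lower_largest p2 -> p1 = p2.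
Proof.
move=> hp1 hd1 hp2 hd2 he12.
have [_ _ hL1 [U1 [l1 m1 u1 n1 _]]] := lower_largest_spec hp1 hd1.
have [_ _ hL2 [U2 [l2 m2 u2 n2 _]]] := lower_largest_spec hp2 hd2.
rewrite he12 in l1 m1 n1.
have eU : U1 = U2 by apply: greedy_walk_uniq l1 l2.
subst U2.
have eL : head 0 p1 = head 0 p2 by have := n1 _ m2 u2; have := n2 _ m1 u1; lia.
case: p1 p2 hp1 hp2 hd1 hd2 he12 eL {hL1 hL2 l1 m1 u1 n1 l2 m2 u2 n2}
  => [|a1 s1] [|a2 s2] hp1 hp2 [_ [U [_ h1]]] [_ [U' [_ h2]]];
  rewrite /= in h1 h2; try (exfalso; lia).
move=> he12 /= ea; subst a2; congr (_ :: _).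
move: he12; rewrite /lower_largest /= => /(perm_sortP geq_total geq_trans geq_anti).
rewrite perm_cons => hperm.
apply: (sorted_eq geq_trans geq_anti) hperm.
  exact: path_sorted (andP hp1).1.
exact: path_sorted (andP hp2).1.
Qed.

(* The inverse map raises the least part b >= U by e. *)
Lemma lower_largest_surj q : is_partition q -> capped q ->
  exists p, [/\ is_partition p, sumn p = sumn q + e, shiftable p & lower_largest p = q].
Proof.
move=> hq /cappedP [U [b [l s1 s2 s3 s4]]].
have hqb x : x \in q -> x <= b + e.
  by move=> hx; case: (leqP U x) => hUx; [have := s4 x hx | ]; lia.
set p := sort geq (b + e :: rem b q).
have hpmem x : (x \in p) = (x == b + e) || (x \in rem b q) by rewrite mem_sort inE.
have hremq x : x \in rem b q -> x \in q by apply: mem_rem.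
have hp : is_partition p.
  apply: sort_part => /=; rewrite addn_gt0 he orbT /=.
  by apply/allP => x /hremq hx; exact: part_pos hq hx.
have hbe : b + e \in p by rewrite hpmem eqxx.
have hpmax x : x \in p -> x <= b + e by rewrite hpmem => /orP [/eqP ->//|/hremq /hqb].
have hhead : head 0 p = b + e by apply: head_max.
have hpne : p = (b + e) :: behead p by case: (p) hbe hhead => //= a s _ ->.
have hperm : perm_eq (behead p) (rem b q).
  by rewrite -(perm_cons (b + e)) -hpne; exact: (permEl (perm_sort _ _)).
have hl2 : greedy_walk T pre U (part_set p).
  apply: (greedy_walk_local hpre l) => x hx; rewrite /part_set hpmem.
  have -> : (x == b + e) = false by apply/negbTE; lia.
  split; last by apply: hremq.
  by move=> hxq; apply: rem_mem => //; apply/eqP; lia.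
exists p; split=> //.
- rewrite (perm_sumn (permEl (perm_sort _ _))) /= (perm_sumn (perm_to_rem s1)) /=; lia.
- split; last by exists U; split=> //; rewrite hhead; lia.
  have hhas : has (fun x => U <= x) p by apply/hasP; exists (b + e) => //; lia.
  have [b' [t1 t2 t3]] := exists_least hhas.
  have hbb : b <= b'.
    move: t1; rewrite hpmem => /orP [/eqP ->|/hremq hx]; first exact: leq_addr.
    exact: s3.
  by apply/cappedP; exists U, b'; split=> // x /hpmax; lia.
rewrite /lower_largest hhead addnK -(sorted_sort geq_trans (andP hq).1).
apply/(perm_sortP geq_total geq_trans geq_anti).
apply: (perm_trans (y := b :: rem b q)); first by rewrite perm_cons.
by rewrite perm_sym; apply: perm_to_rem.
Qed.

Lemma capped_not_shiftable p : is_partition p ->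
  ((capped p /\ ~ largest_high p) <->
   (walk_capped T pre e (part_set p) /\ ~ walk_capped T pre 0 (part_set p))).
Proof.
move=> hp; split.
  case=> /cappedP [U [b [l s1 s2 s3 s4]]] hn.
  have hh : head 0 p < U + e by rewrite ltnNge; apply/negP => h; apply: hn; exists U.
  split; first by exists U; split=> // x hx; exact: leq_ltn_trans (part_head hp hx) hh.
  case=> U' [l' h']; have eU := greedy_walk_uniq l l'; subst U'.
  by have := h' b s1; lia.
case=> [[U [l hlt]] hn].
case: (boolP (has (fun x => U <= x) p)) => hh; last first.
  exfalso; apply: hn; exists U; split=> // x hx; rewrite addn0.
  by move/hasPn: hh => /(_ x hx); rewrite -ltnNge.
have [b [t1 t2 t3]] := exists_least hh.
split; first by apply/cappedP; exists U, b; split=> // x /hlt; lia.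
case=> U' [l' h']; have eU := greedy_walk_uniq l l'; subst U'.
case: p hp hlt hh t1 t3 l l' h' {hn} => // a s hp hlt _ _ _ _ _ /= h'.
by have := hlt a (mem_head a s); lia.
Qed.

Lemma pcount_capped_rec n :
  pcount capped n = (if e <= n then pcount capped (n - e) else 0) +
    (pcount (fun p => walk_capped T pre e (part_set p)) n -
     pcount (fun p => walk_capped T pre 0 (part_set p)) n).
Proof.
rewrite (pcount_split _ largest_high); congr (_ + _).
  case: leqP => hn; last first.
    apply: pcount0 => p hp hs hd; have [_ _ hL _] := lower_largest_spec hp hd.
    by case: p hp hs hd hL => [|a s] _ /= hs _ hL; lia.
  apply: (pcount_bij (f := lower_largest)).
  - move=> p hp hs hd; have [h1 h2 _ [U [_ _ _ _ h3]]] := lower_largest_spec hp hd.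
    by rewrite h2 hs.
  - by move=> p1 p2 hp1 _ hd1 hp2 _ hd2; exact: lower_largest_inj.
  - move=> q hq hs hc; have [p [h1 h2 h3 h4]] := lower_largest_surj hq hc.
    by exists p; split=> //; rewrite h2 hs subnK.
rewrite (@pcount_sub (fun p => walk_capped T pre 0 (part_set p))
                     (fun p => walk_capped T pre e (part_set p)) n).
  by rewrite addKn; apply: eq_pcount => p hp _; exact: capped_not_shiftable.
by move=> p; exact: walk_capped_mono.
Qed.

End LowerLargest.

Lemma rational_walk_capped k : forall T ws e, 0 < T -> size ws = k ->
  all (fun w => 1 < w) ws ->
  rational_series (fun n => (pcount (fun p => walk_capped T ws e (part_set p)) n)%:R%R).
Proof.
elim: k => [|k IH] T ws e hT.
  case: ws => // _ _; apply: eq_rational_series (rational_parts_below (T + e)) => n.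
  congr (_%:R%R); apply: eq_pcount => p _ _; split; first by exists T.
  by case=> U [/= -> h].
case/lastP: ws => // pre d; rewrite size_rcons => [[hs]].
rewrite all_rcons => /andP [hd hpre].
have hpre' : all (fun w => 0 < w) pre by apply: sub_all hpre => w; lia.
set E := (d + e).-1.
have hE : 0 < E by rewrite /E; lia.
have eE : d + e = E.+1 by rewrite /E; lia.
apply: (@eq_rational_series (fun n => (pcount (capped T pre E) n)%:R%R)).
  move=> n; congr (_%:R%R); apply: eq_pcount => p _ _.
  by rewrite (walk_capped_last T pre d e) eE.
have hAE := IH T pre E hT hs hpre; have hA0 := IH T pre 0 hT hs hpre.
apply: (rational_series_rec hE (rational_seriesD hAE (rational_seriesZ (-1) hA0))) => n.
rewrite (pcount_capped_rec hT hpre' hE) natrD natrB; last first.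
  rewrite (@pcount_sub (fun p => walk_capped T pre 0 (part_set p))
                       (fun p => walk_capped T pre E (part_set p)) n) ?leq_addr //.
  by move=> p; exact: walk_capped_mono.
by case: leqP => _; rewrite mulN1r.
Qed.

Fixpoint chain_from (T : nat) (gs : seq nat) (S : nat -> Prop) : Prop :=
  match gs with
  | [::] => True
  | g :: gs' => exists u, [/\ S u, T <= u & chain_from (u + g) gs' S]
  end.

(* The consecutive differences of a list, padded with a final 0 so that the
   result has one entry per element. *)
Fixpoint gaps (s : seq nat) : seq nat :=
  match s with
  | [::] => [::]
  | x :: s' => match s' with [::] => [:: 0] | y :: _ => (y - x) :: gaps s' end
  end.

Lemma chain_from_mono T T' gs S : T' <= T -> chain_from T gs S -> chain_from T' gs S.
Proof.
case: gs => //= g gs h [u [s1 s2 s3]]; exists u; split=> //; exact: leq_trans h s2.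
Qed.

Lemma no_chain_greedy gs : forall T p, ~ chain_from T gs (part_set p) <->
  exists2 j, j < size gs & walk_capped T (take j gs) 0 (part_set p).
Proof.
elim: gs => [|g gs IH] T p /=.
  by split=> [h|[j]] //; exfalso; apply: h.
split.
  move=> h; case: (boolP (has (fun x => T <= x) p)) => hh; last first.
    exists 0 => //; exists T; split=> // x hx; rewrite addn0.
    by move/hasPn: hh => /(_ x hx); rewrite -ltnNge.
  have [b [t1 t2 t3]] := exists_least hh.
  have hn : ~ chain_from (b + g) gs (part_set p) by move=> hc; apply: h; exists b.
  have [j hj [U [l hU]]] := (IH (b + g) p).1 hn.
  by exists j.+1 => //; exists U; split=> //; exists b.
case=> -[|j] hj [U [l hU]] [u [s1 s2 s3]].
  by move: l => /= el; subst U; have := hU u s1; lia.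
case: l => b [t1 t2 t3 l].
have : ~ chain_from (b + g) gs (part_set p).
  by apply/(IH (b + g) p); exists j => //; exists U.
by apply; apply: chain_from_mono s3; rewrite leq_add2r; exact: t3.
Qed.

Lemma walk_capped_prefix ws : forall T g ws' S,
  walk_capped T ws 0 S -> ~ walk_capped T (ws ++ g :: ws') 0 S.
Proof.
elim: ws => [|w ws IH] T g ws' S /=.
  by case=> U [-> h] [U' [[b [s1 s2 _ _]] _]]; have := h b s1; lia.
case=> U [[b [s1 s2 s3 l]] h] [U' [[b' [s1' s2' s3' l']] h']].
have eb : b = b' by apply/eqP; rewrite eqn_leq s3 // s3'.
by subst b'; apply: (IH (b + w) g ws' S); [exists U | exists U'].
Qed.

Lemma walk_capped_take_uniq gs T S i j : i < size gs -> j < size gs ->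
  walk_capped T (take i gs) 0 S -> walk_capped T (take j gs) 0 S -> i = j.
Proof.
wlog hij : i j / i <= j.
  move=> hw hi hj h1 h2; case: (leqP i j) => h; first exact: hw.
  by symmetry; apply: hw => //; exact: ltnW.
move=> hi hj h1 h2; case: (ltngtP i j) => [hlt|hlt|//]; last lia.
have e : take j gs = take i gs ++ take (j - i) (drop i gs) by rewrite -takeD subnKC.
case ed: (drop i gs) => [|g ws].
  by have := size_drop i gs; rewrite ed /=; lia.
move: h2; rewrite e ed; case ej: (j - i) => [|k]; first lia.
by move=> /= /(walk_capped_prefix h1).
Qed.

Definition kept_length (C : seq nat) a := count (fun j => j < a) C.

Lemma kept_length_mono C b a : b <= a -> kept_length C b <= kept_length C a.
Proof. by move=> h; apply: sub_count => j /= hj; exact: leq_trans hj h. Qed.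

Lemma kept_length_lip C b a : uniq C -> b <= a ->
  kept_length C a <= kept_length C b + (a - b).
Proof.
move=> hu hba.
have -> : kept_length C a = kept_length C b + count (fun j => (b <= j) && (j < a)) C.
  rewrite /kept_length; elim: (C) => //= c s ->.
  by case: (ltnP c b) => h1; case: (ltnP c a) => h2 /=; lia.
rewrite leq_add2l -size_filter -(size_iota b (a - b)).
apply: uniq_leq_size; first exact: filter_uniq.
move=> x; rewrite mem_filter mem_iota => /andP [/andP [h1 h2] _].
by apply/andP; split=> //; lia.
Qed.

Lemma kept_length0 C : kept_length C 0 = 0.
Proof. by rewrite /kept_length (@eq_in_count _ _ pred0) ?count_pred0. Qed.

(* Rows of alpha realising the increasing values x :: nu form a chain: a row
   realising a larger value m' > m after one realising m is longer by at least
   m' - m, since kept lengths grow at most as fast as row lengths. *)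
Lemma chain_of_occurrence (alpha C : seq nat) : uniq C -> forall nu x T,
  sorted ltn (x :: nu) ->
  (forall m, m \in x :: nu -> exists a, a \in alpha /\ kept_length C a = m) ->
  (forall a, kept_length C a = x -> T <= a) ->
  chain_from T (gaps (x :: nu)) (part_set alpha).
Proof.
move=> hu; elim=> [|y nu IH] x T hs hw hT.
  by have [a [h1 h2]] := hw x (mem_head _ _); exists a; split=> //; exact: hT.
have [a [h1 h2]] := hw x (mem_head _ _).
exists a; split=> //; first exact: hT.
case/andP: hs => hxy hs; apply: IH => //.
  by move=> m hm; apply: hw; rewrite inE hm orbT.
move=> a' ha'; have hlt : a < a'.
  by rewrite ltnNge; apply/negP => h; have := kept_length_mono C h; lia.
by have := kept_length_lip hu (ltnW hlt); lia.
Qed.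

Fixpoint shifted_sums (n g : nat) (gs : seq nat) : seq nat :=
  match gs with [::] => [::] | g' :: gs' => (n + g) :: shifted_sums (n + g) g' gs' end.

Lemma shifted_sums_gaps nu : forall x, sorted leq (x :: nu) ->
  match gaps (x :: nu) with g :: gs => shifted_sums x g gs = nu | [::] => False end.
Proof.
elim: nu => [|y nu IH] x; first by [].
move=> /andP [hxy hs]; have := IH y hs.
have -> : gaps [:: x, y & nu] = (y - x) :: gaps (y :: nu) by [].
by case: (gaps (y :: nu)) => // g gs /= e; rewrite subnKC // e.
Qed.

(* Conversely, a chain lets us choose columns: for each chain element u' reached
   with gap g, add the g columns just below u'.  Starting from n columns below
   u, the chain elements then keep exactly n + g, n + g + g', ... boxes, and
   rows of length at most u are unaffected. *)
Lemma columns_for_chain (alpha : seq nat) gs : forall u g n D,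
  chain_from (u + g) gs (part_set alpha) ->
  uniq D -> all (fun c => c < u) D -> size D = n ->
  exists D' us, [/\ uniq D', (forall a, a <= u -> kept_length D' a = kept_length D a),
    all (fun x => x \in alpha) us & map (kept_length D') us = shifted_sums n g gs].
Proof.
elim: gs => [|g' gs IH] u g n D /=; first by move=> _ hu _ _; exists D, [::].
case=> u' [s1 s2 s3] hu hall hsz.
set D1 := D ++ iota (u' - g) g.
have hu1 : uniq D1.
  rewrite cat_uniq hu iota_uniq andbT /=; apply/hasPn => c; rewrite mem_iota => hc.
  by apply/negP => /(allP hall) /=; lia.
have hall1 : all (fun c => c < u') D1.
  rewrite all_cat; apply/andP; split; first by apply: sub_all hall => c /=; lia.
  by apply/allP => c; rewrite mem_iota /=; lia.
have hsz1 : size D1 = n + g by rewrite size_cat size_iota hsz.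
have [D' [us [h1 h2 h3 h4]]] := IH u' g' (n + g) D1 s3 hu1 hall1 hsz1.
exists D', (u' :: us); split=> //.
- move=> a ha; rewrite h2; last lia.
  rewrite /kept_length count_cat (@eq_in_count _ _ pred0 (iota _ _)) ?count_pred0 ?addn0 //.
  by move=> c; rewrite mem_iota /=; lia.
- by rewrite /= s1.
rewrite /= h4 h2 // /kept_length (@eq_in_count _ _ predT D1) ?count_predT ?hsz1 //.
by move=> c /(allP hall1).
Qed.

Lemma sorted_subset_subseq (alpha r : seq nat) : sorted geq alpha ->
  sorted (fun x y => y < x) r -> {subset r <= alpha} -> subseq r alpha.
Proof.
move=> ha hr hsub.
have hltr : transitive (fun x y : nat => y < x) by move=> y x z h1 h2; exact: ltn_trans h2 h1.
have hru : uniq r by apply: sorted_uniq hltr _ _ hr => x; rewrite /= ltnn.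
suff -> : r = [seq x <- undup alpha | x \in r].
  exact: subseq_trans (filter_subseq _ _) (undup_subseq _).
apply: (sorted_eq geq_trans geq_anti).
- by apply: sub_sorted hr => x y /= /ltnW.
- by apply: (sorted_filter geq_trans); exact: (subseq_sorted geq_trans (undup_subseq alpha)).
apply: uniq_perm; rewrite ?filter_uniq ?undup_uniq // => x.
by rewrite mem_filter mem_undup; case hx: (x \in r) => //=; rewrite hsub.
Qed.

Lemma occurrence_chain alpha mu x nu : rev mu = x :: nu -> sorted ltn (x :: nu) ->
  contains alpha mu -> chain_from x (gaps (x :: nu)) (part_set alpha).
Proof.
move=> enu hlt [r [C [hsub hu heq]]]; apply: (chain_of_occurrence hu) => //.
  move=> m; rewrite -enu mem_rev -heq mem_filter => /andP [_ /mapP [a hra ->]].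
  by exists a; split=> //; exact: (mem_subseq hsub hra).
by move=> a hca; have := kept_length_lip hu (leq0n a); rewrite kept_length0 hca; lia.
Qed.

(* Conversely, a chain gives an occurrence: keep the chain rows and the
   columns built by columns_for_chain, starting from the x columns just
   below the first chain element. *)
Lemma chain_occurrence alpha mu x nu : is_partition alpha -> all (fun m => 0 < m) mu ->
  rev mu = x :: nu -> sorted ltn (x :: nu) ->
  chain_from x (gaps (x :: nu)) (part_set alpha) -> contains alpha mu.
Proof.
move=> ha hpos enu hlt.
have hle : sorted leq (x :: nu) by apply: sub_sorted hlt => a b /ltnW.
have := shifted_sums_gaps hle; case: (gaps (x :: nu)) => // g gs etg [u1 [s1 s2 s3]].
have hD1 : uniq (iota (u1 - x) x) by exact: iota_uniq.
have hD2 : all (fun c => c < u1) (iota (u1 - x) x) by apply/allP => c; rewrite mem_iota; lia.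
have [D' [us [h1 h2 h3 h4]]] := columns_for_chain s3 hD1 hD2 (size_iota _ _).
have hmap : map (kept_length D') (u1 :: us) = x :: nu.
  rewrite /= h4 etg h2 //; congr (_ :: _); rewrite /kept_length.
  by rewrite (@eq_in_count _ _ predT) ?count_predT ?size_iota // => c /(allP hD2).
exists (rev (u1 :: us)), D'; split=> //; last first.
  have -> : [seq count (fun j => j < a) D' | a <- rev (u1 :: us)] = mu.
    by rewrite map_rev -/(map (kept_length D') (u1 :: us)) hmap -enu revK.
  exact/all_filterP.
apply: sorted_subset_subseq; first by case/andP: ha.
- have : sorted (fun a b => b < a) (map (kept_length D') (rev (u1 :: us))).
    by rewrite map_rev hmap rev_sorted.
  rewrite sorted_map; apply: sub_sorted => a b /= h.
  by rewrite ltnNge; apply/negP => hab; have := kept_length_mono D' hab; lia.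
- by move=> a; rewrite mem_rev inE => /orP [/eqP -> // | /(allP h3)].
Qed.

Lemma contains_iff_chain alpha mu x nu : is_partition alpha -> is_partition mu ->
  rev mu = x :: nu -> sorted ltn (x :: nu) ->
  (contains alpha mu <-> chain_from x (gaps (x :: nu)) (part_set alpha)).
Proof.
move=> ha /andP [_ hpos] enu hlt; split; first exact: occurrence_chain.
exact: chain_occurrence.
Qed.

Lemma super_strict_rev_sorted mu : super_strict mu ->
  sorted (fun a b => a + 2 <= b) (rev mu).
Proof.
move=> hs; rewrite rev_sorted; apply/(sortedP 0) => i hi; apply: hs.
by rewrite leqnn hi.
Qed.

Lemma gaps_steps nu : forall x j, sorted (fun a b => a + 2 <= b) (x :: nu) ->
  j < size (gaps (x :: nu)) -> all (fun w => 1 < w) (take j (gaps (x :: nu))).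
Proof.
elim: nu => [|y nu IH] x j; first by case: j.
move=> /andP [hxy hs]; have -> : gaps [:: x, y & nu] = (y - x) :: gaps (y :: nu) by [].
by case: j => [|j] //= hj; apply/andP; split; [lia | exact: IH].
Qed.

Lemma Av_card_pcount n mu : Av_card n mu = pcount (fun p => ~ contains p mu) n.
Proof.
rewrite /Av_card /pcount /partitions count_filter; apply: eq_count => p /=.
by rewrite /containsb; case: excluded_middle_informative => h; case: propbP => h' //=;
  rewrite ?andbF ?andbT.
Qed.

Lemma contains_nil alpha : contains alpha [::].
Proof. by exists [::], [::]; split; rewrite ?sub0seq. Qed.

Lemma Av_card_greedy mu x nu n : is_partition mu -> rev mu = x :: nu ->
  sorted ltn (x :: nu) ->
  Av_card n mu = \sum_(j < size (gaps (x :: nu)))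
    pcount (fun p => walk_capped x (take j (gaps (x :: nu))) 0 (part_set p)) n.
Proof.
move=> hmu enu hlt; rewrite Av_card_pcount.
set stuck_at := fun j p => walk_capped x (take j (gaps (x :: nu))) 0 (part_set p).
rewrite -(@pcount_disjoint_sum _ stuck_at); last first.
  by move=> p i j hi hj; exact: walk_capped_take_uniq.
apply: eq_pcount => p hp _; rewrite (contains_iff_chain hp hmu enu hlt).
exact: no_chain_greedy.
Qed.

Theorem mainTheorem8 (mu : seq nat) :
  is_partition mu -> super_strict mu -> rational_series (Av_gf_coef mu).
Proof.
move=> hmu hss; case enu: (rev mu) => [|x nu].
  have -> : mu = [::] by rewrite -(revK mu) enu.
  apply: (@rational_series_finite _ 0) => n _.
  rewrite /Av_gf_coef Av_card_pcount pcount0 ?if_same // => p _ _; apply.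
  exact: contains_nil.
have hsort : sorted (fun a b => a + 2 <= b) (x :: nu).
  by rewrite -enu; exact: super_strict_rev_sorted.
have hlt : sorted ltn (x :: nu) by apply: sub_sorted hsort => a b /=; lia.
have hx : 0 < x by case/andP: hmu => _ /allP; apply; rewrite -mem_rev enu mem_head.
set gs := gaps (x :: nu).
have hrat := rational_series_sum (fun j (hj : j < size gs) =>
  rational_walk_capped 0 hx (erefl (size (take j gs))) (gaps_steps hsort hj)).
apply: eq_rational_series (rational_series_drop0 hrat) => n.
by rewrite /Av_gf_coef (Av_card_greedy n hmu enu hlt) natr_sum.
Qed.
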